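(* Let $(A_C,\mathcal R_A)$ be an autocatalytic core of a CRN. Then for every species $X\in A_C$ there is a reaction $r^-\to r^+$ in $\mathcal R_A$ such that $X$ is the only species of $A_C$ occurring in $r^-$, i.e. $\{Y\in A_C: r^-_Y>0\}=\{X\}$.
   Context: A chemical reaction network (CRN) consists of a finite species set $\mathcal S$ and a finite set $\mathcal R$ of reactions; each reaction $r$ is written $r^-\to r^+$ with input complex $r^-\in\mathbb Z_{\ge0}^{\mathcal S}$ and output complex $r^+\in\mathbb Z_{\ge0}^{\mathcal S}$. The input and output matrices $\mathbb S^-,\mathbb S^+$ are the $\mathcal S\times\mathcal R$ matrices whose column indexed by $r$ is $r^-$, resp. $r^+$; the stoichiometric matrix is $\mathbb S=\mathbb S^+-\mathbb S^-$. For a matrix $\mathbb A$ with rows indexed by $\mathcal S$ and columns by $\mathcal R$ and subsets $M\subseteq\mathcal S$, $N\subseteq\mathcal R$, $(\mathbb A)_M^N$ is the submatrix with rows in $M$ and columns in $N$. For a vector $\mathbf v$: $\mathbf v\gg\mathbf 0$ means all entries are $>0$; $\mathbf v>\mathbf 0$ (semi-positive) means all entries are $\ge0$ and $\mathbf v\ne\mathbf 0$. A motif is a pair $(\mathcal M,\mathcal R')$ with $\mathcal M\subseteq\mathcal S$, $\mathcal R'\subseteq\mathcal R$. It is exclusively autocatalytic if: (i) there is $\mathbf v\in\mathbb R^{\mathcal R'}$, $\mathbf v\gg\mathbf0$, with $(\mathbb S)_{\mathcal M}^{\mathcal R'}\mathbf v\gg\mathbf 0$; (ii) every row of $(\mathbb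 S^-)_{\mathcal M}^{\mathcal R'}$ is semi-positive; (iii) every column of $(\mathbb S^-)_{\mathcal M}^{\mathcal R'}$ is semi-positive. An autocatalytic core is an exclusively autocatalytic motif $(A_C,\mathcal R_A)$ such that no motif $(\mathcal M',\mathcal R'')\neq(A_C,\mathcal R_A)$ with $\mathcal M'\subseteq A_C$ and $\mathcal R''\subseteq\mathcal R_A$ is exclusively autocatalytic; $A_C$ is called its core set. *)

From mathcomp Require Import all_boot all_order all_algebra.
Set Implicit Arguments. Unset Strict Implicit. Unset Printing Implicit Defensive.
Import Order.TTheory GRing.Theory Num.Theory.
Local Open Scope ring_scope.

(* A CRN with finite species type S and finite reaction type Rx is given by
   its input and output matrices Sm (= S^-) and Sp (= S^+): Sm X r = r^-_X. *)

Definition stoich (F : realFieldType) (S Rx : finType)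
  (Sm Sp : S -> Rx -> nat) (X : S) (r : Rx) : F :=
  (Sp X r)%:R - (Sm X r)%:R.

Definition excl_autocatalytic (F : realFieldType) (S Rx : finType)
  (Sm Sp : S -> Rx -> nat) (M : {set S}) (N : {set Rx}) : Prop :=
  [/\ M != set0, N != set0,
      (exists v : Rx -> F, (forall r, r \in N -> 0 < v r) /\
         forall X, X \in M -> 0 < \sum_(r in N) stoich F Sm Sp X r * v r),
      (forall X, X \in M -> exists2 r, r \in N & (0 < Sm X r)%N) &
      (forall r, r \in N -> exists2 X, X \in M & (0 < Sm X r)%N)].

Definition autocatalytic_core (F : realFieldType) (S Rx : finType)
  (Sm Sp : S -> Rx -> nat) (A : {set S}) (RA : {set Rx}) : Prop :=
  excl_autocatalytic F Sm Sp A RA /\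
  forall (M : {set S}) (N : {set Rx}), M \subset A -> N \subset RA ->
    excl_autocatalytic F Sm Sp M N -> M = A /\ N = RA.

From mathcomp Require Import all_boot all_order all_algebra.

(* Suppose every reaction of RA consumes some species of A other
   than X.  Then the smaller motif (A \ X, RA) is still exclusively
   autocatalytic: conditions (i) and (ii) are inherited row by row from
   (A, RA), and (iii) is exactly the assumption.  Minimality of the core then
   forces A \ X = A, which is absurd since X belongs to A.  Hence some reaction
   r of RA consumes no species of A \ X; by condition (iii) for the core it
   still consumes a species of A, which can only be X. *)

Section CoreInputs.

Variables (F : realFieldType) (S Rx : finType) (Sm Sp : S -> Rx -> nat).

(* Conditions (i) and (ii) are statements about individual rows of the
   submatrices, so they survive passing to a subset of species; only (iii)
   has to be re-established, and it also yields nonemptiness. *)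
Lemma excl_autocatalytic_sub_species {M M' : {set S}} {N : {set Rx}} :
  excl_autocatalytic F Sm Sp M N -> M' \subset M ->
  (forall r, r \in N -> exists2 X, X \in M' & (0 < Sm X r)%N) ->
  excl_autocatalytic F Sm Sp M' N.
Proof.
move=> [_ N0 [v [vpos growth]] rows _] /subsetP subM' cols'.
split=> //.
- have [r rN] := set0Pn _ N0.
  by have [X XM' _] := cols' r rN; apply/set0Pn; exists X.
- by exists v; split=> // X /subM'; apply: growth.
- by move=> X /subM'; apply: rows.
Qed.

(* In a core, removing any species X breaks condition (iii): some reaction
   of the core has no input species in A \ X. *)
Lemma core_reaction_without_other_inputs {A : {set S}} {RA : {set Rx}} {X} :
  autocatalytic_core F Sm Sp A RA -> X \in A ->
  exists2 r, r \in RA & forall Y, Y \in A :\ X -> Sm Y r = 0%N.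
Proof.
move=> [core minimal] XA.
have [/exists_inP [r rRA /forall_inP noinput] | ] :=
  boolP [exists r in RA, [forall Y in A :\ X, Sm Y r == 0%N]].
  by exists r => // Y /noinput /eqP.
rewrite negb_exists_in => /forall_inP allconsume.
have cols' r : r \in RA -> exists2 Y, Y \in A :\ X & (0 < Sm Y r)%N.
  move=> /allconsume; rewrite negb_forall_in => /exists_inP [Y YAX nz].
  by exists Y; rewrite // lt0n.
have subAX : A :\ X \subset A := subsetDl A [set X].
have [eqA _] := minimal _ _ subAX (subxx RA)
  (excl_autocatalytic_sub_species core subAX cols').
by move: XA; rewrite -eqA !inE eqxx.
Qed.

Lemma inputs_singleton (M : {set S}) (r : Rx) X :
  (exists2 Z, Z \in M & (0 < Sm Z r)%N) ->
  (forall Y, Y \in M :\ X -> Sm Y r = 0%N) ->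
  [set Y in M | (0 < Sm Y r)%N] = [set X].
Proof.
move=> [Z ZM Zpos] others.
have only_X_consumed Y : Y \in M -> (0 < Sm Y r)%N -> Y = X.
  move=> YM Ypos; apply/eqP; apply: contraTT Ypos => YX.
  by rewrite others // !inE YX.
apply/setP=> Y; rewrite !inE; apply/andP/eqP=> [[YM Ypos] | ->].
  exact: only_X_consumed.
by rewrite -(only_X_consumed Z ZM Zpos).
Qed.

End CoreInputs.

Theorem mainTheorem3 (F : realFieldType) (S Rx : finType)
  (Sm Sp : S -> Rx -> nat) (A : {set S}) (RA : {set Rx}) :
  autocatalytic_core F Sm Sp A RA ->
  forall X, X \in A ->
    exists2 r, r \in RA & [set Y in A | (0 < Sm Y r)%N] = [set X].
Proof.
move=> core X XA.
have [r rRA others] := core_reaction_without_other_inputs F S Rx Sm Sp core XA.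
have [[_ _ _ _ cols] _] := core.
by exists r => //; apply: inputs_singleton (cols r rRA) others.
Qed.
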